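(* For $n\ge1$, the sum of the semi-perimeters of all members of $I_n$ is $\frac{1}{12}(n^2+15n+8)\,n!$.
   Context: An inversion sequence of length $n$ is a sequence $\rho=\rho_1\cdots\rho_n$ of integers with $1\le \rho_i\le i$ for all $i$; $I_n$ is the set of these. Represent $\rho$ as a bargraph whose $i$-th column has $\rho_i$ unit cells standing on the $x$-axis. The semi-perimeter of $\rho$ is half the perimeter of this bargraph (bottom boundary included), i.e. $n+\rho_1+\sum_{i=1}^{n-1}\max(\rho_{i+1}-\rho_i,0)$. *)

From mathcomp Require Import all_boot.
Set Implicit Arguments. Unset Strict Implicit. Unset Printing Implicit Defensive.

(* An inversion sequence rho_1 ... rho_n is encoded as a finite function
   rho : 'I_n -> 'I_n.+1 where position i : 'I_n corresponds to index i+1,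
   with values constrained by 1 <= rho_{i+1} <= i+1. *)
Definition is_invseq (n : nat) (rho : {ffun 'I_n -> 'I_n.+1}) : bool :=
  [forall i : 'I_n, (0 < rho i) && (rho i <= i.+1)].

(* value rho_{k+1} as a nat (0 outside the range, unused) *)
Definition rv (n : nat) (rho : {ffun 'I_n -> 'I_n.+1}) (k : nat) : nat :=
  match insub k with Some i => nat_of_ord (rho i) | None => 0 end.

(* semi-perimeter: n + rho_1 + sum_{i=1}^{n-1} max(rho_{i+1} - rho_i, 0);
   with 0-based k, rho_{k+1} = rv rho k. Truncated nat subtraction = max(.,0). *)
Definition semiperimeter (n : nat) (rho : {ffun 'I_n -> 'I_n.+1}) : nat :=
  n + rv rho 0 + \sum_(0 <= k < n.-1) (rv rho k.+1 - rv rho k).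

From mathcomp Require Import all_boot zify.
Set Implicit Arguments.
Unset Strict Implicit.
Unset Printing Implicit Defensive.

(* Under the uniform distribution on I_n the entries rho_i are independent,
   rho_i being uniform on [1, i], because I_n is the product of these
   intervals.  By linearity the total semi-perimeter is
   n! (n + E rho_1 + sum_i E (rho_(i+1) - rho_i)^+), where E rho_1 = 1 and
   E (rho_(i+1) - rho_i)^+ = (i + 2) / 6 follows from the box sum
   sum_(a <= i, b <= i+1) (b - a)^+ = i (i + 1) (i + 2) / 6.  Summing over
   i < n gives n + 1 + (n - 1) (n + 4) / 12 times n!. *)

Section FamilySums.
Variables (aT rT : finType).
Implicit Types (F : aT -> pred rT) (f : {ffun aT -> rT}).

Local Notation "#|family F |" := #|(family F : simpl_pred {ffun aT -> rT})|
  (format "#|family  F |").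

Lemma card_family_prod F : #|family F| = \prod_(x : aT) #|F x|.
Proof. by rewrite card_family foldrE big_map big_enum. Qed.

Definition pin F (i : aT) (a : rT) : aT -> pred rT :=
  fun x => if x == i then pred1 a : pred rT else F x.

Lemma pin_neq F i j a : j != i -> pin F i a j = F j.
Proof. by rewrite /pin => /negbTE ->. Qed.

Lemma card_family_pin F i a : a \in F i ->
  #|family (pin F i a)| * #|F i| = #|family F|.
Proof.
move=> Fia; rewrite !card_family_prod (bigD1 i) // [RHS](bigD1 i) //=.
rewrite /pin eqxx card1 mul1n mulnC; congr (_ * _).
by apply: eq_bigr => x /negbTE ->.
Qed.

Lemma in_family_pin F i a f : a \in F i ->
  (f \in family (pin F i a)) = (f \in family F) && (f i == a).
Proof.
move=> Fia; apply/familyP/andP => [Ff | [/familyP Ff /eqP fi] x].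
  have := Ff i; rewrite /pin eqxx inE => fi; split => //.
  by apply/familyP => x; case: (eqVneq x i) => [-> | /negbTE ne];
    [rewrite (eqP fi) | have := Ff x; rewrite /pin ne].
by rewrite /pin; case: eqP => [-> | _]; [rewrite inE fi | exact: Ff].
Qed.

Lemma sum_family_pin F i (G : {ffun aT -> rT} -> nat) :
  \sum_(f in family F) G f = \sum_(a in F i) \sum_(f in family (pin F i a)) G f.
Proof.
rewrite (partition_big (fun f : {ffun aT -> rT} => f i) (F i)).
  by apply: eq_bigr => a Fia; apply: eq_bigl => f; rewrite in_family_pin.
by move=> f /familyP; apply.
Qed.

Lemma sum_family_coord F (g : rT -> nat) i :
  (\sum_(f in family F) g (f i)) * #|F i| = #|family F| * \sum_(a in F i) g a.
Proof.
rewrite (sum_family_pin _ i) big_distrl big_distrr /=; apply: eq_bigr => a Fia.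
rewrite (eq_bigr (fun=> g a)) => [|f]; last first.
  by rewrite in_family_pin // => /andP[_ /eqP ->].
by rewrite sum_nat_const mulnAC card_family_pin // mulnC.
Qed.

Lemma sum_family_coord2 F (g : rT -> rT -> nat) i j : i != j ->
  (\sum_(f in family F) g (f i) (f j)) * (#|F i| * #|F j|) =
  #|family F| * \sum_(a in F i) \sum_(b in F j) g a b.
Proof.
move=> neq_ij; rewrite (sum_family_pin _ i) big_distrl big_distrr /=.
apply: eq_bigr => a Fia.
rewrite (eq_bigr (fun f => g a (f j))) => [|f]; last first.
  by rewrite in_family_pin // => /andP[_ /eqP ->].
have pinFj : pin F i a j = F j by rewrite pin_neq // eq_sym.
rewrite mulnCA -pinFj sum_family_coord pinFj.
by rewrite mulnA (mulnC #|F i|) card_family_pin.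
Qed.

End FamilySums.

Lemma sum_subn_interval a m :
  2 * \sum_(1 <= b < m.+1) (b - a) = (m - a) * (m - a).+1.
Proof.
elim: m => [|m IHm]; first by rewrite big_geq.
rewrite big_nat_recr //= mulnDr IHm.
case: (leqP a m) => [le_am | lt_ma]; first by rewrite subSn //; nia.
by rewrite (eqP (ltnW lt_ma)) (_ : m.+1 - a = 0) //; lia.
Qed.

Lemma sum_rev_mul_succ k :
  3 * \sum_(1 <= a < k.+2) (k.+2 - a) * (k.+3 - a) = k.+1 * k.+2 * k.+3.
Proof.
elim: k => [|k IHk]; first by rewrite big_nat1.
rewrite big_nat_recl // mulnDr.
under eq_big_nat => a _ do rewrite !subSS.
by rewrite IHk; nia.
Qed.

Lemma sum_subn_box k :
  6 * \sum_(1 <= a < k.+2) \sum_(1 <= b < k.+3) (b - a) = k.+1 * k.+2 * k.+3.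
Proof.
rewrite -sum_rev_mul_succ (_ : 6 = 3 * 2) // -mulnA big_distrr /=.
congr (_ * _); apply: eq_big_nat => a /andP[_ lt_a_k2].
by rewrite sum_subn_interval -subSn // ltnW.
Qed.

Lemma sum_add3 m : 2 * \sum_(0 <= k < m) (k + 3) = m * (m + 5).
Proof.
elim: m => [|m IHm]; first by rewrite big_geq.
by rewrite big_nat_recr //= mulnDr IHm; nia.
Qed.

Definition invseq_range n : 'I_n -> pred 'I_n.+1 :=
  fun i x => (0 < x) && (x <= i.+1).

Lemma is_invseqE n (rho : {ffun 'I_n -> 'I_n.+1}) :
  is_invseq rho = (rho \in family (@invseq_range n)).
Proof. by []. Qed.

Lemma sum_invseq_range n (i : 'I_n) (h : nat -> nat) :
  \sum_(x in invseq_range i) h x = \sum_(1 <= a < i.+2) h a.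
Proof.
by rewrite big_geq_mkord (big_ord_widen_cond n.+1) // ltnS.
Qed.

Lemma card_invseq_range n (i : 'I_n) : #|invseq_range i| = i.+1.
Proof.
rewrite -sum1_card (sum_invseq_range i (fun=> 1)).
by rewrite sum_nat_const_nat muln1 subn1.
Qed.

Lemma card_invseq n :
  #|(family (@invseq_range n) : simpl_pred {ffun 'I_n -> 'I_n.+1})| = n`!.
Proof.
rewrite card_family_prod fact_prod big_add1 big_mkord.
by apply: eq_bigr => i _; rewrite card_invseq_range.
Qed.

Lemma rvE n (rho : {ffun 'I_n -> 'I_n.+1}) k (lt_kn : k < n) :
  rv rho k = rho (Ordinal lt_kn).
Proof. by rewrite /rv insubT. Qed.

Lemma sum_invseq_first n : 0 < n ->
  \sum_(rho in family (@invseq_range n)) rv rho 0 = n`!.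
Proof.
move=> n_gt0; rewrite (eq_bigr _ (fun rho _ => rvE rho n_gt0)).
have := sum_family_coord (@invseq_range n) (@nat_of_ord _) (Ordinal n_gt0).
rewrite card_invseq card_invseq_range (sum_invseq_range _ id).
by rewrite big_nat1 !muln1.
Qed.

Lemma sum_invseq_ascent n k : k.+1 < n ->
  6 * \sum_(rho in family (@invseq_range n)) (rv rho k.+1 - rv rho k)
  = n`! * (k + 3).
Proof.
move=> lt_k1n; have lt_kn := ltnW lt_k1n.
rewrite (eq_bigr _ (fun rho _ =>
  congr2 subn (rvE rho lt_k1n) (rvE rho lt_kn))).
have neq_k_k1 : Ordinal lt_kn != Ordinal lt_k1n.
  by rewrite -val_eqE /= neq_ltn ltnSn.
have box : \sum_(a in invseq_range (Ordinal lt_kn))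
    \sum_(b in invseq_range (Ordinal lt_k1n)) ((b : nat) - a)
    = \sum_(1 <= a < k.+2) \sum_(1 <= b < k.+3) (b - a).
  under eq_bigr => a _ do rewrite (sum_invseq_range _ (fun b => b - a)).
  exact: (sum_invseq_range _ (fun a => \sum_(1 <= b < k.+3) (b - a))).
have := sum_family_coord2 (@invseq_range n)
  (fun a b : 'I_n.+1 => (b : nat) - a) neq_k_k1.
rewrite card_invseq !card_invseq_range box => sum_eq.
apply/eqP; rewrite -(eqn_pmul2r (_ : 0 < k.+1 * k.+2)) //.
by rewrite -mulnA sum_eq mulnCA sum_subn_box; apply/eqP; nia.
Qed.

Theorem corollary2p4 (n : nat) : 0 < n ->
  12 * (\sum_(rho : {ffun 'I_n -> 'I_n.+1} | is_invseq rho) semiperimeter rho)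
  = (n ^ 2 + 15 * n + 8) * n`!.
Proof.
move=> n_gt0; rewrite (eq_bigl _ _ (@is_invseqE n)) /semiperimeter.
rewrite !big_split /= sum_nat_const card_invseq sum_invseq_first // exchange_big /=.
have ascents : 12 * \sum_(0 <= k < n.-1)
    \sum_(rho in family (@invseq_range n)) (rv rho k.+1 - rv rho k)
    = n`! * (n.-1 * (n.-1 + 5)).
  rewrite (_ : 12 = 2 * 6) // -mulnA big_distrr /=.
  rewrite (eq_big_nat _ _ (fun k lt_k => sum_invseq_ascent _)); last by lia.
  by rewrite -big_distrr /= [LHS]mulnCA sum_add3.
by rewrite !mulnDr ascents; nia.
Qed.
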